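(* Let $\varphi$ be a random dynamical system with memoryless noise on $X$ (setting in the context), let $\rho$ be a stationary probability measure of the Markov transition probabilities $(\varphi_x^t)$, and let $\mu_\rho$ be the unique past-measurable invariant measure of $\varphi$ satisfying $\pi_{X*}\mu_\rho=\rho$. Then $\mu_\rho$ is the only probability measure $\mu'$ on $(\Omega\times X,\mathcal{F}\otimes\mathcal{B}(X))$ that is invariant under $\Theta^t$ for all $t\in\mathbb{T}^+$ and whose restriction to $\mathcal{F}_0^\infty\otimes\mathcal{B}(X)$ coincides with $\mathbb{P}|_{\mathcal{F}_0^\infty}\otimes\rho$.
   Context: Setting. $\mathbb{T}$ is $\mathbb{Z}$ or $\mathbb{R}$, $\mathbb{T}^+ := \mathbb{T}\cap[0,\infty)$. $(\Omega,\mathcal{F})$ is a measurable space with sub-$\sigma$-algebras $(\mathcal{F}_s^{s+t})_{s\in\mathbb{T},t\in\mathbb{T}^+}$ such that $\mathcal{F}_{t_1}^{t_2}\subset\mathcal{F}_{t_0}^{t_3}$ whenever $t_0\le t_1\le t_2\le t_3$, and these generate $\mathcal{F}$. Write $\mathcal{F}_s^\infty:=\sigma(\mathcal{F}_s^{s+t}:t\in\mathbb{T}^+)$ and $\mathcal{F}_{-\infty}^t:=\sigma(\mathcal{F}_{t-s}^t:s\in\mathbb{T}^+)$. $(\theta^t)_{t\in\mathbb{T}}$ is a group of measurable maps $\Omega\to\Omega$ with $\theta^\tau\mathcal{F}_s^t=\mathcal{F}_{s-\tau}^{t-\tau}$. $\mathbb{P}$ is a probability measure on $(\Omega,\mathcal{F})$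 with $\theta^t_*\mathbb{P}=\mathbb{P}$, and such that for each $t$, $\mathcal{F}_{-\infty}^t$ and $\mathcal{F}_t^\infty$ are $\mathbb{P}$-independent. $(X,d)$ is a separable metric space which is a Borel subset of its $d$-completion. $\varphi=(\varphi(t,\omega))_{t\in\mathbb{T}^+,\omega\in\Omega}$ is a family of continuous maps $X\to X$ such that (a) $\omega\mapsto\varphi(t,\omega)x$ is $(\mathcal{F}_0^t,\mathcal{B}(X))$-measurable; (b) $\varphi(0,\omega)=\mathrm{id}_X$; (c) $\varphi(s+t,\omega)=\varphi(t,\theta^s\omega)\circ\varphi(s,\omega)$; (d) if $t_n\downarrow t$ in $\mathbb{T}^+$ and $x_n\to x$ then $\varphi(t_n,\omega)x_n\to\varphi(t,\omega)x$ for all $\omega$. Transition probabilities: $\varphi_x^t(A):=\mathbb{P}(\omega:\varphi(t,\omega)x\in A)$; $\rho$ is stationary if $\rho(A)=\int\varphi_x^t(A)\rho(dx)$ for all $t,A$. $\Theta^t(\omega,x):=(\theta^t\omega,\varphi(t,\omega)x)$; $\pi_\Omega,\pi_X$ are the projections of $\Omega\times X$. Definitions. A probability measure $\mu$ on $(\Omega\times X,\mathcal{F}\otimes\mathcal{B}(X))$ is $\mathbb{P}$-compatible if $\pi_{\Omega*}\mu=\mathbb{P}$; such $\mu$ has a disintegration $(\mu_\omega)_{\omega\in\Omega}$ (a measurable family of probability measures on $X$ with $\mu(A)=\int\mu_\omega(\{x:(\omega,x)\in A\})\mathbb{P}(d\omega)$), unique up to $\mathbb{P}$-a.e. equality. $\mu$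 is past-measurable if it admits a disintegration with $\omega\mapsto\mu_\omega(A)$ being $\mathcal{F}_{-\infty}^0$-measurable for all Borel $A$. An invariant measure of $\varphi$ is a $\mathbb{P}$-compatible probability measure invariant under all $\Theta^t$, $t\in\mathbb{T}^+$. It is known (and assumed here) that for each stationary $\rho$ there is a unique past-measurable invariant measure $\mu_\rho$ of $\varphi$ with $\pi_{X*}\mu_\rho=\rho$. *)

From HB Require Import structures.
From mathcomp Require Import all_boot all_order all_algebra.
From mathcomp Require Import all_classical all_reals all_analysis.
From mathcomp Require Import measurable_realfun.

Set Implicit Arguments.
Unset Strict Implicit.
Unset Printing Implicit Defensive.

Import Order.TTheory GRing.Theory Num.Theory.
Import numFieldNormedType.Exports.
Local Open Scope classical_set_scope.
Local Open Scope ring_scope.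

Section Defs.
Context {R : realType}.

(* Time set: T = Z (tZ = true) or T = R (tZ = false), embedded in R. *)
Definition Tset (tZ : bool) : set R :=
  if tZ then [set x | exists z : int, x = z%:~R] else setT.
Definition Tplus (tZ : bool) : set R := [set t | Tset tZ t /\ 0 <= t].

Context {d : measure_display} {Omega : measurableType d}.

(* Fil s t = F_s^t, meaningful for s <= t in T *)
Definition is_filtration (tZ : bool) (Fil : R -> R -> set (set Omega)) :=
  [/\ (forall s t, Tset tZ s -> Tset tZ t -> s <= t ->
         sigma_algebra setT (Fil s t) /\ Fil s t `<=` measurable),
      (forall t0 t1 t2 t3, Tset tZ t0 -> Tset tZ t1 -> Tset tZ t2 -> Tset tZ t3 ->
         t0 <= t1 -> t1 <= t2 -> t2 <= t3 -> Fil t1 t2 `<=` Fil t0 t3) &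
      (@measurable _ Omega =
         <<s [set A | exists s t, [/\ Tset tZ s, Tset tZ t, s <= t & Fil s t A]] >>)].

Definition Future (tZ : bool) (Fil : R -> R -> set (set Omega)) (s : R) :=
  <<s [set A | exists t, Tplus tZ t /\ Fil s (s + t) A] >>.
Definition Past (tZ : bool) (Fil : R -> R -> set (set Omega)) (t : R) :=
  <<s [set A | exists s, Tplus tZ s /\ Fil (t - s) t A] >>.

Definition is_shift (tZ : bool) (Fil : R -> R -> set (set Omega))
    (theta : R -> Omega -> Omega) :=
  [/\ (forall t, Tset tZ t -> measurable_fun setT (theta t)),
      theta 0 = id,
      (forall s t, Tset tZ s -> Tset tZ t -> theta (s + t) = theta s \o theta t) &
      (forall tau s t, Tset tZ tau -> Tset tZ s -> Tset tZ t -> s <= t ->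
         [set theta tau @` A | A in Fil s t] = Fil (s - tau) (t - tau))].

Definition memoryless_noise (tZ : bool) (Fil : R -> R -> set (set Omega))
    (theta : R -> Omega -> Omega) (P : probability Omega R) :=
  (forall t, Tset tZ t -> forall A, measurable A -> P (theta t @^-1` A) = P A) /\
  (forall t, Tset tZ t -> forall A B, Past tZ Fil t A -> Future tZ Fil t B ->
     P (A `&` B) = (P A * P B)%E).

End Defs.

Definition Borel {R : realType} (X : pseudoPMetricType R) :=
  g_sigma_algebraType (@open X).

(* X is a Borel subset of its completion: there is an isometric embedding of
   X into a complete metric space whose image is a Borel set. *)
Definition Borel_in_completion {R : realType} (X : pseudoPMetricType R) :=
  exists (Y : completePseudoMetricType R) (i : X -> Y),
    [/\ hausdorff_space Y,
        (forall (x y : X) (e : R), ball x e y <-> ball (i x) e (i y)) &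
        <<s @open Y >> (range i)].

Definition good_space {R : realType} (X : pseudoPMetricType R) :=
  [/\ hausdorff_space X,
      (exists D : set X, countable D /\ dense D) &
      Borel_in_completion X].

Section RDS.
Context {R : realType} {d : measure_display} {Omega : measurableType d}
  {X : pseudoPMetricType R}.
Local Open Scope classical_set_scope.
Local Open Scope ring_scope.

Definition is_RDS (tZ : bool) (Fil : R -> R -> set (set Omega))
    (theta : R -> Omega -> Omega) (phi : R -> Omega -> X -> X) :=
  [/\ (forall t w, Tplus tZ t -> continuous (phi t w)),
      (forall t (x : X), Tplus tZ t -> forall B : set (Borel X), measurable B ->
         Fil 0 t ((fun w => phi t w x) @^-1` B)),
      (forall w, phi 0 w = id),
      (forall s t w, Tplus tZ s -> Tplus tZ t ->
         phi (s + t) w = phi t (theta s w) \o phi s w) &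
      (forall (w : Omega) (tn : nat -> R) (t : R) (xn : nat -> X) (x : X),
         (forall n, Tplus tZ (tn n)) -> Tplus tZ t ->
         (forall n, tn n.+1 <= tn n) -> tn @ \oo --> t -> xn @ \oo --> x ->
         (fun n => phi (tn n) w (xn n)) @ \oo --> phi t w x)].

Definition transition (P : probability Omega R) (phi : R -> Omega -> X -> X)
    (t : R) (x : X) (A : set (Borel X)) : \bar R :=
  P ((fun w => phi t w x) @^-1` A).

Definition stationary (tZ : bool) (P : probability Omega R)
    (phi : R -> Omega -> X -> X) (rho : probability (Borel X) R) :=
  forall t, Tplus tZ t -> forall A : set (Borel X), measurable A ->
    rho A = (\int[rho]_x transition P phi t x A)%E.

Definition Theta (theta : R -> Omega -> Omega) (phi : R -> Omega -> X -> X)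
    (t : R) : (Omega * Borel X)%type -> (Omega * Borel X)%type :=
  fun p => (theta t p.1, phi t p.1 p.2).

Definition Theta_invariant (tZ : bool) (theta : R -> Omega -> Omega)
    (phi : R -> Omega -> X -> X) (mu : probability (Omega * Borel X)%type R) :=
  forall t, Tplus tZ t -> forall S : set (Omega * Borel X)%type, measurable S ->
    mu (Theta theta phi t @^-1` S) = mu S.

Definition P_compatible (P : probability Omega R)
    (mu : probability (Omega * Borel X)%type R) :=
  forall A : set Omega, measurable A -> mu (A `*` setT) = P A.

Definition invariant_measure (tZ : bool) (P : probability Omega R)
    (theta : R -> Omega -> Omega) (phi : R -> Omega -> X -> X)
    (mu : probability (Omega * Borel X)%type R) :=
  P_compatible P mu /\ Theta_invariant tZ theta phi mu.

Definition disintegration (P : probability Omega R)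
    (mu : probability (Omega * Borel X)%type R)
    (k : Omega -> probability (Borel X) R) :=
  (forall B : set (Borel X), measurable B -> measurable_fun setT (fun w => k w B)) /\
  (forall S : set (Omega * Borel X)%type, measurable S ->
     mu S = (\int[P]_w k w [set x | S (w, x)])%E).

Definition past_measurable (tZ : bool) (Fil : R -> R -> set (set Omega))
    (P : probability Omega R) (mu : probability (Omega * Borel X)%type R) :=
  exists k : Omega -> probability (Borel X) R,
    disintegration P mu k /\
    forall B : set (Borel X), measurable B ->
      forall E : set (\bar R), measurable E -> Past tZ Fil 0 ((fun w => k w B) @^-1` E).

Definition X_marginal (mu : probability (Omega * Borel X)%type R)
    (rho : probability (Borel X) R) :=
  forall B : set (Borel X), measurable B -> mu (setT `*` B) = rho B.

Definition future_prod (tZ : bool) (Fil : R -> R -> set (set Omega)) :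
    set (set (Omega * Borel X)%type) :=
  <<s [set C | exists (A : set Omega) (B : set (Borel X)),
          [/\ Future tZ Fil 0 A, measurable B & C = A `*` B]] >>.

Definition restr_is_product (tZ : bool) (Fil : R -> R -> set (set Omega))
    (P : probability Omega R) (rho : probability (Borel X) R)
    (mu : probability (Omega * Borel X)%type R) :=
  forall S, future_prod tZ Fil S -> mu S = (P \x rho)%E S.

End RDS.

From HB Require Import structures.
From mathcomp Require Import all_boot all_order all_algebra.
From mathcomp Require Import all_classical all_reals all_analysis.
From mathcomp Require Import measurable_realfun.
From mathcomp Require Import ring lra.
Import Order.TTheory GRing.Theory Num.Theory.
Import numFieldNormedType.Exports.
Local Open Scope classical_set_scope.
Local Open Scope ring_scope.

(** Past-measurability of [mu_rho] and the independence of F_{-oo}^0 and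
   F_0^oo give mu_rho(A x B) = \int_A mu_w(B) dP = P(A) rho(B) for A in F_0^oo,
   so [mu_rho] restricts to P (x) rho on F_0^oo (x) B(X).  Conversely, a
   Theta-invariant measure is determined by that restriction: for A in
   F_{-n}^oo, Theta^n pulls A x B back into F_0^oo (x) B(X), because theta^n
   maps F_{-n}^oo into F_0^oo and phi(n) is F_0^n-measurable in w and continuous
   in x, hence jointly measurable on the separable space X; and these
   rectangles form a pi-system generating F (x) B(X). *)

Section TimeSet.
Variables (R : realType) (tZ : bool).

Lemma Tset_add (a b : R) : Tset tZ a -> Tset tZ b -> Tset tZ (a + b).
Proof.
by rewrite /Tset; case: tZ => //= -[za ->] [zb ->]; exists (za + zb); rewrite rmorphD.
Qed.

Lemma Tset_opp (a : R) : Tset tZ a -> Tset tZ (- a).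
Proof. by rewrite /Tset; case: tZ => //= -[za ->]; exists (- za); rewrite rmorphN. Qed.

Lemma Tset_sub (a b : R) : Tset tZ a -> Tset tZ b -> Tset tZ (a - b).
Proof. by move=> Ta Tb; apply: Tset_add => //; exact: Tset_opp. Qed.

Lemma Tset_nat (n : nat) : Tset tZ (n%:R : R).
Proof. by rewrite /Tset; case: tZ => //=; exists n%:Z; rewrite -pmulrn. Qed.

Lemma Tplus_nat (n : nat) : Tplus tZ (n%:R : R).
Proof. by split; [exact: Tset_nat | exact: ler0n]. Qed.

End TimeSet.
Arguments Tset_add {R tZ a b}.
Arguments Tset_opp {R tZ a}.
Arguments Tset_sub {R tZ a b}.
Arguments Tset_nat {R} tZ n.
Arguments Tplus_nat {R} tZ n.

Lemma exists_nat_oppr_le {R : realType} (s : R) : exists n : nat, - n%:R <= s.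
Proof.
exists (Num.bound `|s|); rewrite lerNl.
apply: le_trans (ltW (archi_boundP (normr_ge0 s))).
by rewrite -normrN ler_norm.
Qed.

Lemma probability_eq_on_sigma (d : measure_display) (T : measurableType d)
    (R : realType) (G : set (set T)) (P1 P2 : probability T R) :
  G `<=` measurable -> setI_closed G -> G setT ->
  (forall A, G A -> P1 A = P2 A) -> forall A, <<s G >> A -> P1 A = P2 A.
Proof.
move=> Gm GI GT P12.
apply: (@g_sigma_algebra_measure_unique _ _ _ G Gm (fun=> setT)) => //.
- by apply/seteqP; split => // x _; exists 0%N.
- by move=> _; rewrite (le_lt_trans (probability_le1 _ measurableT)) ?ltey.
Qed.

Section Future.
Context {R : realType} {tZ : bool} {d : measure_display} {Omega : measurableType d}
  {Fil : R -> R -> set (set Omega)}.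

Lemma Future_setT s : Future tZ Fil s setT.
Proof. exact: (@measurableT _ (g_sigma_algebraType _)). Qed.

Lemma Future_setI_closed s : setI_closed (Future tZ Fil s).
Proof. exact: (@measurableI _ (g_sigma_algebraType _)). Qed.

Hypothesis hFil : is_filtration tZ Fil.

Lemma Future_sub_measurable s : Tset tZ s -> Future tZ Fil s `<=` measurable.
Proof.
move=> Ts; apply: smallest_sub; first exact: sigma_algebra_measurable.
move=> A [t [[Tt t0] FA]]; case: hFil => hsigma _ _.
by apply: (hsigma s (s + t) Ts (Tset_add Ts Tt) _).2; rewrite ?lerDl.
Qed.

Lemma Fil_sub_Future u s t : Tset tZ u -> Tset tZ s -> Tset tZ t ->
  u <= s -> s <= t -> Fil s t `<=` Future tZ Fil u.
Proof.
move=> Tu Ts Tt us st A FA; apply: sub_sigma_algebra; exists (t - u); split.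
  by split; [exact: Tset_sub | rewrite subr_ge0 (le_trans us)].
case: hFil => _ hmono _; rewrite addrC subrK.
exact: (hmono u s t t Tu Ts Tt Tt us st (lexx t)).
Qed.

Lemma Future_antimono s s' : Tset tZ s -> Tset tZ s' -> s <= s' ->
  Future tZ Fil s' `<=` Future tZ Fil s.
Proof.
move=> Ts Ts' ss'; apply: smallest_sub; first exact: smallest_sigma_algebra.
move=> A [t [[Tt t0] FA]].
by apply: (Fil_sub_Future _ _ _ Ts Ts' (Tset_add Ts' Tt) ss' _ _ FA); rewrite lerDl.
Qed.

Context {theta : R -> Omega -> Omega}.
Hypothesis hshift : is_shift tZ Fil theta.

Lemma preimage_theta tau (A : set Omega) : Tset tZ tau ->
  theta tau @^-1` A = theta (- tau) @` A.
Proof.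
move=> Ttau; case: hshift => _ theta0 thetaD _.
have thetaK (a b : R) : Tset tZ a -> Tset tZ b -> a + b = 0 ->
    cancel (theta b) (theta a).
  by move=> Ta Tb ab0 x; rewrite -[theta a _]/((theta a \o theta b) x) -thetaD // ab0 theta0.
have Tntau := Tset_opp Ttau.
apply/seteqP; split => x.
  by move=> Ax; exists (theta tau x); rewrite // (thetaK (- tau)) ?addNr.
by move=> [a Aa <-] /=; rewrite (thetaK tau) ?subrr.
Qed.

Lemma Future_preimage_theta tau (A : set Omega) : Tset tZ tau ->
  Future tZ Fil (- tau) A -> Future tZ Fil 0 (theta tau @^-1` A).
Proof.
move=> Ttau; move: A; apply: smallest_sub.
  split => /=.
  - by rewrite preimage_set0; exact: sigma_algebra0.
  - by move=> A FA; rewrite setTD preimage_setC -setTD; exact: sigma_algebraCD.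
  - by move=> F FF; rewrite preimage_bigcup; exact: sigma_algebra_bigcup.
move=> A [t [[Tt t0] FA]] /=; rewrite preimage_theta //.
case: hshift => _ _ _ thetaFil.
have Tntau := Tset_opp Ttau.
have := thetaFil (- tau) (- tau) (- tau + t) Tntau Tntau (Tset_add Tntau Tt).
rewrite lerDl subrr (_ : - tau + t - - tau = t); last by ring.
move=> /(_ t0) thetaFilt.
have FtA : Fil 0 t (theta (- tau) @` A) by rewrite -thetaFilt; exists A.
by apply: sub_sigma_algebra; exists t; rewrite add0r.
Qed.

End Future.

Definition rect_sigma {R : realType} {d : measure_display} {Omega : measurableType d}
    (X : pseudoPMetricType R) (G : set (set Omega)) : set (set (Omega * Borel X)%type) :=
  <<s [set C | exists (A : set Omega) (B : set (Borel X)),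
          [/\ G A, measurable B & C = A `*` B]] >>.

Lemma Borel_open_measurable (R : realType) (X : pseudoPMetricType R) (U : set X) :
  open U -> measurable (U : set (Borel X)).
Proof. exact: sub_sigma_algebra. Qed.

Lemma Borel_closed_measurable (R : realType) (X : pseudoPMetricType R) (C : set X) :
  closed C -> measurable (C : set (Borel X)).
Proof.
move=> cC; rewrite -[C]setCK; apply: measurableC.
by apply: Borel_open_measurable; exact: closed_openC.
Qed.

Section Caratheodory.
Context {R : realType} {X : pseudoPMetricType R} {D : set X}.
Hypothesis dD : dense D.

Let r (j : nat) : R := j.+1%:R^-1.

Let r_gt0 j : 0 < r j. Proof. by rewrite invr_gt0. Qed.

Let exists_r_lt {e : R} : 0 < e -> exists j, r j < e.
Proof.
move=> e0; exists (Num.bound e^-1); rewrite /r invf_plt ?posrE //.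
apply: (lt_le_trans (archi_boundP _)); first by rewrite invr_ge0 ltW.
by rewrite ler_nat.
Qed.

Let continuous_ball {h : X -> X} (x : X) {e : R} : continuous h -> 0 < e ->
  exists2 del, 0 < del & forall z, ball x del z -> ball (h x) e (h z).
Proof.
move=> hc e0; have /nbhs_ballP [del del0 hdel] := hc x _ (nbhsx_ballx (h x) _ e0).
by exists del => // z /hdel.
Qed.

(* The key to joint measurability of Caratheodory functions. *)
Lemma continuous_open_preimageP (g : nat -> X) (h : X -> X) (U : set X) x :
  D `<=` range g -> continuous h -> open U ->
  U (h x) <-> exists j k, forall n, interior (ball (g n) (r k)) x ->
                closure [set y | ball y (r j + r j) `<=` U] (h (g n)).
Proof.
move=> gD hc oU; split.
- move=> Uhx; have /nbhs_ballP [eps eps0 epsU] : nbhs (h x) U.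
    by move: oU; rewrite openE => /(_ _ Uhx).
  have [j rj] := exists_r_lt (divr_gt0 eps0 (ltr0n R 3)).
  have [del del0 hdel] := continuous_ball x hc (r_gt0 j).
  have [k rk] := exists_r_lt del0.
  exists j, k => n /interior_subset/ball_sym xgn.
  apply: subset_closure => y hy; apply: epsU.
  have := ball_triangle (hdel _ (le_ball (ltW rk) xgn)) hy; apply: le_ball.
  by move: rj; rewrite /r; set q := _^-1 => rj; lra.
- move=> [j [k Cjk]].
  have [del del0 hdel] := continuous_ball x hc (r_gt0 j).
  pose e := Num.min del (r k / 2).
  have e0 : 0 < e by rewrite lt_min del0 divr_gt0.
  have [z [Iz Dz]] : interior (ball x e) `&` D !=set0.
    by apply: dD; [exists x; exact: nbhsx_ballx | exact: open_interior].
  have xez : ball x e z := interior_subset Iz.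
  have [n _ gnz] := gD z Dz.
  have Ogn : interior (ball (g n) (r k)) x.
    rewrite gnz; apply/nbhs_ballP; exists e => // y zey.
    apply: (le_ball _ (ball_triangle (ball_sym xez) zey)).
    have : e <= r k / 2 by rewrite ge_min lexx orbT.
    lra.
  have hxz : ball (h x) (r j) (h z).
    by apply: hdel; apply: (le_ball _ xez); rewrite ge_min lexx.
  move: (Cjk n Ogn); rewrite gnz => /(_ _ (nbhsx_ballx _ _ (r_gt0 j))) [y [Sy hzy]].
  by apply: Sy; exact: (ball_triangle (ball_sym hzy) (ball_sym hxz)).
Qed.

Hypothesis cD : countable D.
Context {d : measure_display} {Omega : measurableType d} {G : set (set Omega)}.
Hypothesis GT : G setT.
Context {f : Omega -> X -> X}.
Hypothesis fc : forall w, continuous (f w).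
Hypothesis fG : forall x (B : set (Borel X)), measurable B -> G ((fun w => f w x) @^-1` B).

Let rects := [set C | exists (A : set Omega) (B : set (Borel X)),
  [/\ G A, measurable B & C = A `*` B]].

Lemma rect_sigma_preimage_open (U : set X) : open U ->
  rect_sigma X G [set p : Omega * Borel X | U (f p.1 p.2)].
Proof.
move=> oU; have /pcard_surjP [g gD] := cD.
have -> : [set p : Omega * Borel X | U (f p.1 p.2)] = \bigcup_j \bigcup_k \bigcap_n
    (setT `*` ~` interior (ball (g n) (r k)) `|`
     ((fun w => f w (g n)) @^-1` closure [set y | ball y (r j + r j) `<=` U]) `*` setT).
  apply/seteqP; split => -[w x] /=.
  - move=> /(continuous_open_preimageP _ _ _ x gD (fc w) oU) [j [k Cjk]].
    exists j => //; exists k => // n _ /=.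
    by have [/Cjk|] := pselect (interior (ball (g n) (r k)) x); [right | left].
  - move=> [j _ [k _ Cjk]]; apply/(continuous_open_preimageP _ _ _ x gD (fc w) oU).
    by exists j, k => n Ox; case: (Cjk n I) => /= [[_ /(_ Ox)] | []].
apply: (@bigcupT_measurable _ (g_sigma_algebraType rects)) => j.
apply: (@bigcupT_measurable _ (g_sigma_algebraType rects)) => k.
apply: (@bigcapT_measurable _ (g_sigma_algebraType rects)) => n.
apply: (@measurableU _ (g_sigma_algebraType rects)); apply: sub_sigma_algebra.
- exists setT, (~` interior (ball (g n) (r k))); split => //.
  by apply: measurableC; apply: Borel_open_measurable; exact: open_interior.
- exists ((fun w => f w (g n)) @^-1` closure [set y | ball y (r j + r j) `<=` U]), setT.
  by split => //; apply: fG; apply: Borel_closed_measurable; exact: closed_closure.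
Qed.

Lemma rect_sigma_preimage (B : set (Borel X)) : measurable B ->
  rect_sigma X G [set p : Omega * Borel X | B (f p.1 p.2)].
Proof.
pose C := [set B : set X | rect_sigma X G [set p : Omega * Borel X | B (f p.1 p.2)]].
apply: (@smallest_sub _ (sigma_algebra setT) (@open X) C); last first.
  by move=> U; exact: rect_sigma_preimage_open.
split; rewrite /C /=.
- rewrite (_ : [set p | _] = set0); last by apply/seteqP; split.
  exact: (@measurable0 _ (g_sigma_algebraType rects)).
- move=> A CA; rewrite (_ : [set p | _] = setT `\` [set p | A (f p.1 p.2)]).
    exact: (@measurableD _ (g_sigma_algebraType rects) _ _ measurableT CA).
  by apply/seteqP; split.
- move=> F CF; rewrite (_ : [set p | _] = \bigcup_n [set p | F n (f p.1 p.2)]).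
    exact: (@bigcupT_measurable _ (g_sigma_algebraType rects)).
  by apply/seteqP; split.
Qed.

End Caratheodory.

Local Open Scope ereal_scope.

Lemma ge0_integral_indep (R : realType) (d : measure_display) (Omega : measurableType d)
    (P : probability Omega R) (A : set Omega) (g : Omega -> \bar R) :
  measurable A -> measurable_fun setT g -> (forall w, 0 <= g w) ->
  (forall E, measurable E -> P (A `&` g @^-1` E) = P A * P (g @^-1` E)) ->
  \int[P]_(w in A) g w = P A * \int[P]_w g w.
Proof.
move=> mA mg g0 Ag_indep.
pose pos := [set y : \bar R | 0 < y].
have mpos : measurable pos.
  rewrite (_ : pos = [set` `]0%E, +oo]]); first exact: emeasurable_itv.
  by apply/seteqP; split => y /=; rewrite in_itv /= ?leey ?andbT // => /andP[].
have pos_ge0 y : y \in pos -> 0 <= y by rewrite inE => /ltW.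
have integral_pos (f : Omega -> \bar R) : (forall w, 0 <= f w) ->
    \int[P]_(w in f @^-1` pos) f w = \int[P]_w f w.
  move=> f0; rewrite integral_mkcond; apply: eq_integral => w _.
  rewrite /patch; case: ifPn => // /negP; rewrite inE /pos /= => fw.
  by apply/le_anti/andP; split; [exact: f0 | rewrite leNgt; exact/negP].
pose h := g \_ A.
have h0 w : 0 <= h w by rewrite /h /patch; case: ifP.
have mh : measurable_fun setT h.
  by apply/(measurable_restrictT _ _).1 => //; exact: measurable_funS mg.
(* On ]0, +oo] the law of [g \_ A] is [P A] times the law of [g]. *)
rewrite integral_mkcond -/h -(integral_pos h h0).
rewrite -(ge0_integral_pushforward mh P (f := id) mpos) //.
have PAfin : P A \is a fin_num by exact: fin_num_measure.
pose c := NngNum (fine_ge0 (measure_ge0 P A)).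
rewrite (eq_measure_integral (mscale c (pushforward P g))); last first.
  move=> E mE Epos; change (P (h @^-1` E) = (fine (P A))%:E * P (g @^-1` E)).
  rewrite fineK //.
  rewrite (_ : h @^-1` E = A `&` g @^-1` E) ?Ag_indep //.
  apply/seteqP; split => w /=; last first.
    by move=> [Aw gE]; rewrite /h /patch (mem_set Aw).
  rewrite /h /patch; case: ifPn => [/set_mem Aw|_ /Epos]; first by split.
  by rewrite /pos /= ltxx.
rewrite (ge0_integral_mscale _ mpos) //; last by move=> y /ltW.
rewrite /c /= fineK //; congr (_ * _).
by rewrite (ge0_integral_pushforward mg P (f := id) mpos) // integral_pos.
Qed.

Section DisintegrationProduct.
Context {R : realType} {d : measure_display} {Omega : measurableType d}
  {X : pseudoPMetricType R} {P : probability Omega R} {rho : probability (Borel X) R}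
  {mu : probability (Omega * Borel X)%type R} {k : Omega -> probability (Borel X) R}.
Hypothesis hdis : disintegration P mu k.

Lemma disintegration_rect (A : set Omega) (B : set (Borel X)) :
  measurable A -> measurable B -> mu (A `*` B) = \int[P]_(w in A) k w B.
Proof.
move=> mA mB; case: hdis => _ ->; last exact: measurableX.
rewrite [RHS]integral_mkcond; apply: eq_integral => w _; rewrite /patch.
case: ifPn => [/set_mem Aw | /negP Aw].
  by congr (k w _); apply/seteqP; split => x /=; [case | split].
by rewrite (_ : [set x | _] = set0) ?measure0 //; apply/seteqP; split => x //= [/mem_set].
Qed.

Context {G H : set (set Omega)}.
Hypothesis hmarg : X_marginal mu rho.
Hypothesis kH : forall B : set (Borel X), measurable B ->
  forall E : set (\bar R), measurable E -> H ((fun w => k w B) @^-1` E).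
Hypothesis HG_indep : forall A B, H A -> G B -> P (A `&` B) = P A * P B.
Hypotheses (Gm : G `<=` measurable) (GI : setI_closed G) (GT : G setT).

Lemma disintegration_indep_rect (A : set Omega) (B : set (Borel X)) :
  G A -> measurable B -> mu (A `*` B) = P A * rho B.
Proof.
move=> GA mB; have mA := Gm _ GA.
rewrite -hmarg // !disintegration_rect //.
apply: ge0_integral_indep => //; first by case: hdis => /(_ B mB).
by move=> E mE; rewrite setIC muleC; apply: HG_indep => //; exact: kH.
Qed.

Lemma disintegration_rect_sigma_product S : rect_sigma X G S -> mu S = (P \x rho) S.
Proof.
apply: probability_eq_on_sigma.
- by move=> _ [A [B [GA mB ->]]]; exact: measurableX (Gm _ GA) mB.
- move=> _ _ [A1 [B1 [GA1 mB1 ->]]] [A2 [B2 [GA2 mB2 ->]]].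
  by exists (A1 `&` A2), (B1 `&` B2); rewrite setXI; split => //; [exact: GI | exact: measurableI].
- by exists setT, setT; rewrite setXTT.
- move=> _ [A [B [GA mB ->]]].
  rewrite disintegration_indep_rect //.
  exact: (esym (product_measure1E P rho (Gm _ GA) mB)).
Qed.

End DisintegrationProduct.

Local Close Scope ereal_scope.

Section ShiftedRectangles.
Context {R : realType} {tZ : bool} {d : measure_display} {Omega : measurableType d}
  {Fil : R -> R -> set (set Omega)} {X : pseudoPMetricType R}.
Hypothesis hFil : is_filtration tZ Fil.

Definition shifted_rects : set (set (Omega * Borel X)%type) :=
  [set C | exists (n : nat) (A : set Omega) (B : set (Borel X)),
     [/\ Future tZ Fil (- n%:R) A, measurable B & C = A `*` B]].

Lemma shifted_rects_measurable : shifted_rects `<=` measurable.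
Proof.
move=> _ [n [A [B [FA mB ->]]]].
exact: measurableX (Future_sub_measurable hFil _ (Tset_opp (Tset_nat tZ n)) _ FA) mB.
Qed.

Lemma shifted_rects_setI_closed : setI_closed shifted_rects.
Proof.
move=> _ _ [n1 [A1 [B1 [FA1 mB1 ->]]]] [n2 [A2 [B2 [FA2 mB2 ->]]]].
exists (maxn n1 n2), (A1 `&` A2), (B1 `&` B2); rewrite setXI; split => //.
  have Fmax (n : nat) : (n <= maxn n1 n2)%N ->
      Future tZ Fil (- n%:R) `<=` Future tZ Fil (- (maxn n1 n2)%:R).
    move=> nmax; apply: (Future_antimono hFil); try exact: Tset_opp (Tset_nat tZ _).
    by rewrite lerN2 ler_nat.
  by apply: Future_setI_closed; [exact: Fmax (leq_maxl n1 n2) _ FA1 |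
                                  exact: Fmax (leq_maxr n1 n2) _ FA2].
exact: measurableI.
Qed.

Lemma shifted_rects_setT : shifted_rects setT.
Proof. by exists 0%N, setT, setT; rewrite setXTT; split => //; exact: Future_setT. Qed.

Lemma sigma_shifted_rects_rect (A : set Omega) (B : set (Borel X)) :
  measurable A -> measurable B -> <<s shifted_rects >> (A `*` B).
Proof.
pose SR := g_sigma_algebraType shifted_rects.
move=> + mB; case: hFil => _ _ ->; move: A.
apply: (@smallest_sub _ _ _ [set A | @measurable _ SR (A `*` B)]).
  split => /=.
  - by rewrite set0X; exact: measurable0.
  - move=> A ASR; rewrite (_ : _ `*` _ = (setT `*` B) `\` (A `*` B)).
      apply: measurableD ASR; apply: sub_sigma_algebra.
      by exists 0%N, setT, B; split => //; exact: Future_setT.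
    apply/seteqP; split => -[w x] /=; first by move=> [[_ nAw] Bx]; split => // -[].
    by move=> [[_ Bx] nAB]; split => //; split => // Aw; apply: nAB.
  - by move=> F FSR; rewrite setX_bigcupl; exact: bigcupT_measurable.
move=> A [s [t [Ts Tt st FA]]]; have [n ns] := exists_nat_oppr_le s.
apply: sub_sigma_algebra; exists n, A, B; split => //.
exact: (Fil_sub_Future hFil _ _ _ (Tset_opp (Tset_nat tZ n)) Ts Tt ns st _ FA).
Qed.

Lemma shifted_rects_generate S : measurable S -> <<s shifted_rects >> S.
Proof.
rewrite measurable_prod_measurableType; apply: smallest_sub.
  exact: smallest_sigma_algebra.
by move=> _ [A mA [B mB <-]]; exact: sigma_shifted_rects_rect.
Qed.

Context {theta : R -> Omega -> Omega} {phi : R -> Omega -> X -> X}.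
Hypotheses (hshift : is_shift tZ Fil theta) (hRDS : is_RDS tZ Fil theta phi).
Hypothesis separable_X : exists D : set X, countable D /\ dense D.

Lemma future_prod_preimage_Theta tau (A : set Omega) (B : set (Borel X)) :
  Tplus tZ tau -> Future tZ Fil (- tau) A -> measurable B ->
  future_prod tZ Fil (Theta theta phi tau @^-1` (A `*` B)).
Proof.
move=> [Ttau tau0] FA mB; have [D [cD dD]] := separable_X.
case: hRDS => phic phiFil _ _ _.
have -> : Theta theta phi tau @^-1` (A `*` B) =
    (theta tau @^-1` A `*` setT) `&` [set p : Omega * Borel X | B (phi tau p.1 p.2)].
  by apply/seteqP; split => -[w x] /=; [case | move=> [[? _] ?]].
apply: (@measurableI _ (g_sigma_algebraType _)).
  apply: sub_sigma_algebra; exists (theta tau @^-1` A), setT; split => //.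
  exact: Future_preimage_theta.
apply: (@rect_sigma_preimage _ _ _ dD cD _ _ _ (Future_setT 0) (phi tau)) => //.
- by move=> w; exact: phic.
- move=> x B' mB'; apply: sub_sigma_algebra; exists tau; rewrite add0r.
  by split => //; exact: phiFil.
Qed.

Lemma Theta_invariant_eq_future_prod (mu1 mu2 : probability (Omega * Borel X)%type R) :
  Theta_invariant tZ theta phi mu1 -> Theta_invariant tZ theta phi mu2 ->
  (forall S, future_prod tZ Fil S -> mu1 S = mu2 S) ->
  forall S, measurable S -> mu1 S = mu2 S.
Proof.
move=> inv1 inv2 mu12 S /shifted_rects_generate; apply: probability_eq_on_sigma.
- exact: shifted_rects_measurable.
- exact: shifted_rects_setI_closed.
- exact: shifted_rects_setT.
move=> _ [n [A [B [FA mB ->]]]].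
have mAB : measurable (A `*` B) by apply: shifted_rects_measurable; exists n, A, B.
rewrite -(inv1 _ (Tplus_nat tZ n) _ mAB) -(inv2 _ (Tplus_nat tZ n) _ mAB).
by apply: mu12; apply: future_prod_preimage_Theta => //; exact: Tplus_nat.
Qed.

End ShiftedRectangles.

Theorem proposition3p4 (R : realType) (tZ : bool)
  (d : measure_display) (Omega : measurableType d)
  (Fil : R -> R -> set (set Omega)) (theta : R -> Omega -> Omega)
  (P : probability Omega R)
  (X : pseudoPMetricType R) (phi : R -> Omega -> X -> X)
  (rho : probability (Borel X) R)
  (mu_rho : probability (Omega * Borel X)%type R) :
  is_filtration tZ Fil ->
  is_shift tZ Fil theta ->
  memoryless_noise tZ Fil theta P ->
  good_space X ->
  is_RDS tZ Fil theta phi ->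
  stationary tZ P phi rho ->
  (* mu_rho is the unique past-measurable invariant measure with X-marginal rho *)
  invariant_measure tZ P theta phi mu_rho ->
  past_measurable tZ Fil P mu_rho ->
  X_marginal mu_rho rho ->
  (forall nu : probability (Omega * Borel X)%type R,
     invariant_measure tZ P theta phi nu -> past_measurable tZ Fil P nu ->
     X_marginal nu rho ->
     forall S : set (Omega * Borel X)%type, measurable S -> nu S = mu_rho S) ->
  (* conclusion *)
  Theta_invariant tZ theta phi mu_rho /\
  restr_is_product tZ Fil P rho mu_rho /\
  (forall mu' : probability (Omega * Borel X)%type R,
     Theta_invariant tZ theta phi mu' ->
     restr_is_product tZ Fil P rho mu' ->
     forall S : set (Omega * Borel X)%type, measurable S -> mu' S = mu_rho S).
Proof.
move=> hFil hshift [_ hindep] [_ hsep _] hRDS _ [_ hinv] [k [hdis kpast]] hmarg _.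
have T0 : Tset tZ (0 : R) := Tset_nat tZ 0.
have restr : restr_is_product tZ Fil P rho mu_rho.
  apply: (disintegration_rect_sigma_product hdis hmarg kpast (hindep 0 T0)).
  - exact: Future_sub_measurable.
  - exact: Future_setI_closed.
  - exact: Future_setT.
split=> //; split=> // mu' hinv' hres'.
apply: (Theta_invariant_eq_future_prod hFil hshift hRDS hsep _ _ hinv' hinv) => S FS.
by rewrite hres' // restr.
Qed.
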